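(* With $\mathcal N=\mathbb N^*$, $\Omega=\{x,y\}$, $U$ and the operation $\odot$ as in the context, one has $$S_{\mathcal N}\odot U=S_\Omega,\qquad T_{\mathcal N}\odot U=T_\Omega.$$
   Context: Words and moulds: $\underline{\mathcal N}$, $\underline\Omega$ are the sets of finite words over $\mathcal N$, $\Omega$ (empty word $\emptyset$, length $r(\cdot)$); moulds are functions to $\mathbb Q$ with product $(M\times N)^{\underline n}=\sum_{\underline n=\underline a\underline b}M^{\underline a}N^{\underline b}$, unit $\mathbb 1$, $e^M=\sum_kM^{\times k}/k!$ ($M^\emptyset=0$), $\log M=\sum_{k\ge1}\frac{(-1)^{k-1}}k(M-\mathbb 1)^{\times k}$ ($M^\emptyset=1$). $S_{\mathcal N}^\emptyset=1$, $S_{\mathcal N}^{n_1\cdots n_r}=1/(n_r(n_r+n_{r-1})\cdots(n_r+\cdots+n_1))$, $T_{\mathcal N}=\log S_{\mathcal N}$. $I_x$ (resp. $I_y$) is $1$ on the one-letter word $x$ (resp. $y$) and $0$ elsewhere; $S_\Omega=e^{I_x}\times e^{I_y}$, i.e. $S_\Omega^{x^py^q}=\frac1{p!q!}$ and $S_\Omega$ vanishes on words not of the form $x^py^q$; $T_\Omega=\log S_\Omega$. $U\in\mathbb Q^{\underline\Omega}$: $U^x=1$, $U^{x^pyx^q}=\frac{(-1)^q}{p!q!}$ ($p,q\in\mathbb N$), $0$ otherwise. For $M\in\mathbb Q^{\underline{\mathcal N}}$, $(M\odot U)^\emptyset=M^\emptyset$ and for nonempty $\underline\omega$, $(M\odot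 U)^{\underline\omega}=\sum_{s\ge1}\sum_{\underline\omega=\underline\omega^1\cdots\underline\omega^s,\ \underline\omega^i\ne\emptyset}M^{r(\underline\omega^1)\cdots r(\underline\omega^s)}U^{\underline\omega^1}\cdots U^{\underline\omega^s}$. *)

From HB Require Import structures.
From mathcomp Require Import all_boot all_order all_algebra.
Set Implicit Arguments. Unset Strict Implicit. Unset Printing Implicit Defensive.
Import Order.TTheory GRing.Theory Num.Theory.
Local Open Scope ring_scope.

Definition mould (A : Type) := seq A -> rat.

Definition onem {A : Type} : mould A := fun w => if w is [::] then 1 else 0.

Definition mulm {A : Type} (M N : mould A) : mould A :=
  fun w => \sum_(i < (size w).+1) M (take i w) * N (drop i w).

Definition powm {A : Type} (M : mould A) (k : nat) : mould A := iter k (mulm M) onem.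

(* e^M = sum_k M^{xk}/k!  (for M^emptyset = 0, only k <= length w contribute) *)
Definition expm {A : Type} (M : mould A) : mould A :=
  fun w => \sum_(k < (size w).+1) powm M k w / (k`!)%:R.

(* log M = sum_{k>=1} (-1)^{k-1}/k (M - 1)^{xk}  (for M^emptyset = 1, only
   k <= length w contribute) *)
Definition logm {A : Type} (M : mould A) : mould A :=
  fun w => \sum_(1 <= k < (size w).+1)
             (-1) ^+ k.-1 / k%:R * powm (fun v => M v - onem v) k w.

(* ---------- alphabet N = N^* (words: seq nat with positive letters) ---------- *)
Definition S_N : mould nat :=
  fun w => \prod_(k < size w) ((\sum_(i <- drop k w) i)%:R)^-1.

Definition T_N : mould nat := logm S_N.

Inductive Omega := lx | ly.
Definition is_y (a : Omega) : bool := if a is ly then true else false.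

Definition I_x : mould Omega := fun w => if w is [:: lx] then 1 else 0.
Definition I_y : mould Omega := fun w => if w is [:: ly] then 1 else 0.

Definition S_Om : mould Omega := mulm (expm I_x) (expm I_y).
Definition T_Om : mould Omega := logm S_Om.

(* U^x = 1, U^{x^p y x^q} = (-1)^q/(p! q!), 0 otherwise *)
Definition U : mould Omega :=
  fun w =>
    if w is [:: lx] then 1
    else if (count is_y w == 1)%N then
      let p := find is_y w in
      let q := (size w - p - 1)%N in
      (-1) ^+ q / ((p`!)%:R * (q`!)%:R)
    else 0.

(* all factorisations w = w^1 ... w^s into nonempty factors (s >= 1 if w <> []);
   fuel = size w suffices *)
Fixpoint facts_aux {A : Type} (fuel : nat) (w : seq A) : seq (seq (seq A)) :=
  match fuel with
  | 0 => [:: [::]]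
  | fuel'.+1 =>
      if w is [::] then [:: [::]]
      else flatten [seq [seq take i w :: f | f <- facts_aux fuel' (drop i w)]
                   | i <- iota 1 (size w)]
  end.
Definition factorizations {A : Type} (w : seq A) := facts_aux (size w) w.

Definition odotU (M : mould nat) : mould Omega :=
  fun w => if w is [::] then M [::]
           else \sum_(f <- factorizations w) M (map size f) * \prod_(p <- f) U p.

(** The substitution [M |-> M (.) U] is a morphism of mould algebras: it
    preserves the unit, linear combinations and products, hence logarithms, so
    the second identity follows from the first.  It also intertwines the
    derivation [M |-> M * (n_1 + ... + n_r)] on [N]-moulds with multiplication
    by the length of the word.  Since [S_N] is the unique mould with
    [S_N^emptyset = 1] and [(n_1 + ... + n_r) S_N^{n_1...n_r} = S_N^{n_2...n_r}],
    [S_N (.) U] is determined by the recursion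
    [r(w) X^w = sum_{w = a b, a <> emptyset} U^a X^b], and a direct computation
    on words [x^p y x^q ...] shows that [S_Omega] satisfies it: splitting off
    a prefix [x^i] contributes only for [i = 1], and splitting off [x^p y x^j]
    gives an alternating binomial sum. *)
From HB Require Import structures.
From mathcomp Require Import all_boot all_order all_algebra zify ring.
Set Implicit Arguments. Unset Strict Implicit. Unset Printing Implicit Defensive.
Import Order.TTheory GRing.Theory Num.Theory.
Local Open Scope ring_scope.

Section MouldExtensionality.
Variable A : Type.
Implicit Types (M N : mould A) (w : seq A).

Lemma eq_mulm M M' N N' w :
  (forall v, M v = M' v) -> (forall v, N v = N' v) -> mulm M N w = mulm M' N' w.
Proof. by move=> eqM eqN; apply: eq_bigr => i _; rewrite eqM eqN. Qed.

Lemma eq_powm M M' k w : (forall v, M v = M' v) -> powm M k w = powm M' k w.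
Proof. by move=> eqM; elim: k w => [|k IHk] w //=; apply: eq_mulm. Qed.

Lemma eq_logm M M' w : (forall v, M v = M' v) -> logm M w = logm M' w.
Proof.
move=> eqM; apply: eq_bigr => k _; congr (_ * _).
by apply: eq_powm => v; rewrite eqM.
Qed.

Lemma powm_gt_size N k w : N [::] = 0 -> (size w < k)%N -> powm N k w = 0.
Proof.
move=> N0; elim: k w => [|k IHk] w // ltwk.
rewrite /powm /= -/(powm N k) /mulm big_ord_recl take0 N0 mul0r add0r.
rewrite big1 // => i _; rewrite IHk ?mulr0 // size_drop lift0.
by move: ltwk (ltn_ord i); lia.
Qed.

Lemma logm_widen M K w : M [::] = 1 -> (size w < K)%N ->
  logm M w = \sum_(1 <= k < K) (-1) ^+ k.-1 / k%:R * powm (fun v => M v - onem v) k w.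
Proof.
move=> M1 ltwK; rewrite /logm [RHS](big_cat_nat _ (n := (size w).+1)) //=.
rewrite [X in _ + X]big1_seq ?addr0 // => k /andP[_].
rewrite mem_index_iota => /andP[ltwk _].
by rewrite powm_gt_size ?mulr0 //= M1 subrr.
Qed.

End MouldExtensionality.

Section LetterExponential.
Variables (A : eqType) (a : A) (I : mould A).
Hypothesis IE : forall s, I s = (s == [:: a])%:R.

Lemma powm_letter k v : powm I k v = (v == nseq k a)%:R.
Proof.
elim: k v => [|k IHk] v; first by case: v.
rewrite /powm /= -/(powm I k) /mulm.
case: v => [|b v]; first by rewrite big_ord1 /= IE mul0r.
rewrite (bigD1 (@Ordinal (size (b :: v)).+1 1 isT)) //= big1 ?addr0.
  rewrite IE IHk /= take0 drop0 !eqseq_cons andbT.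
  by case: (b == a); case: (v == nseq k a); rewrite ?mul1r ?mul0r.
move=> i ne1; rewrite IE; case: eqP => [e|_]; last by rewrite mul0r.
have := congr1 size e; rewrite size_takel; last by rewrite -ltnS.
by move=> i1; move: ne1; rewrite -val_eqE /= i1.
Qed.

Lemma expm_letter v : expm I v = if all (pred1 a) v then ((size v)`!%:R)^-1 else 0.
Proof.
rewrite /expm (bigD1 ord_max) //= big1 ?addr0.
  rewrite powm_letter; case: (all_pred1P a v) => [e|ne].
    by rewrite -e eqxx mul1r.
  by rewrite (introF eqP ne) mul0r.
move=> i ne; rewrite powm_letter; case: eqP => [e|_]; last by rewrite mul0r.
have := congr1 size e; rewrite size_nseq => sizev.
by move: ne; rewrite -val_eqE /= => /eqP []; exact: esym.
Qed.

End LetterExponential.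

Section Substitution.
Variables (A : eqType) (V : mould A).
Implicit Types (M N : mould nat) (w : seq A).

Definition odotm M : mould A :=
  fun w => \sum_(f <- factorizations w) M (map size f) * \prod_(p <- f) V p.

Lemma odotm_nil M : odotm M [::] = M [::].
Proof. by rewrite /odotm /factorizations /= big_seq1 /= big_nil mulr1. Qed.

Lemma facts_aux_fuel n1 n2 w : (size w <= n1)%N -> (size w <= n2)%N ->
  facts_aux n1 w = facts_aux n2 w.
Proof.
elim: n1 n2 w => [|n1 IHn] [|n2] [|a w] // le1 le2; cbn [facts_aux].
congr flatten; apply/eq_in_map => i; rewrite mem_iota => /andP[lt0i lei].
by rewrite (IHn n2) // size_drop; move: le1 le2 lt0i lei => /=; lia.
Qed.

Lemma odotm_rec M w : w != [::] ->
  odotm M w = \sum_(1 <= i < (size w).+1) V (take i w) * odotm (fun n => M (i :: n)) (drop i w).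
Proof.
case: w => [|a w] // _; rewrite /odotm {1}/factorizations.
change (size (a :: w)) with (size w).+1; cbn [facts_aux].
rewrite big_flatten big_map /index_iota subn1 big_seq [RHS]big_seq.
apply: eq_bigr => i; rewrite mem_iota /= => /andP[lt0i lei].
rewrite big_map mulr_sumr /factorizations (@facts_aux_fuel (size w) (size (drop i (a :: w)))).
- apply: eq_bigr => f _ /=.
  by rewrite big_cons size_takel /= 1?mulrCA //; lia.
- by rewrite size_drop /=; lia.
- by [].
Qed.

Lemma eq_odotm M M' w : (forall n, M n = M' n) -> odotm M w = odotm M' w.
Proof. by move=> eqM; apply: eq_bigr => f _; rewrite eqM. Qed.

Lemma eq_odotm_le M M' w : (forall n, (size n <= size w)%N -> M n = M' n) ->
  odotm M w = odotm M' w.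
Proof.
elim: {w}(size w).+1 {-2}w (ltnSn (size w)) M M' => [|k IHk] [|a w] // ltwk M M' eqM.
  by rewrite !odotm_nil eqM.
rewrite !odotm_rec //; apply: eq_big_nat => i /andP[lt0i leiw]; congr (_ * _).
apply: IHk => [|v]; rewrite size_drop; move: ltwk leiw => /=; first by lia.
by move=> ? ? lev; apply: eqM => /=; lia.
Qed.

Lemma odotm0 w : odotm (fun _ => 0) w = 0.
Proof. by rewrite /odotm big1 // => f _; rewrite mul0r. Qed.

Lemma odotmD M N w : odotm (fun n => M n + N n) w = odotm M w + odotm N w.
Proof. by rewrite /odotm -big_split; apply: eq_bigr => f _; rewrite mulrDl. Qed.

Lemma odotmZ c M w : odotm (fun n => c * M n) w = c * odotm M w.
Proof. by rewrite /odotm mulr_sumr; apply: eq_bigr => f _; rewrite mulrA. Qed.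

Lemma odotmB M N w : odotm (fun n => M n - N n) w = odotm M w - odotm N w.
Proof.
rewrite -mulN1r -odotmZ -odotmD.
by apply: eq_odotm => n; rewrite mulN1r.
Qed.

Lemma odotm_sum (I : Type) (r : seq I) (P : pred I) (F : I -> mould nat) w :
  odotm (fun n => \sum_(k <- r | P k) F k n) w = \sum_(k <- r | P k) odotm (F k) w.
Proof.
rewrite /odotm exchange_big /=; apply: eq_bigr => f _.
by rewrite mulr_suml.
Qed.

Lemma odotm1 w : odotm onem w = onem w.
Proof.
case: w => [|a w]; first by rewrite odotm_nil.
rewrite odotm_rec // big1 // => i _.
by rewrite (@eq_odotm _ (fun _ => 0)) // odotm0 mulr0.
Qed.

Lemma mulm_cons (M N : mould nat) i n :
  mulm M N (i :: n) = M [::] * N (i :: n) + mulm (fun v => M (i :: v)) N n.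
Proof. by rewrite /mulm /= big_ord_recl. Qed.

(* After expanding the first factor [take i w] on both sides, the identity
   reduces to exchanging the sums over [1 <= i <= j <= r(w)], where [j] is the
   position in [w] of the cut of [M * N]. *)
Lemma odotmM M N w : odotm (mulm M N) w = mulm (odotm M) (odotm N) w.
Proof.
elim: {w}(size w).+1 {-2}w (ltnSn (size w)) M N => [|k IHk] [|a w'] // ltwk M N.
  by rewrite odotm_nil /mulm /= !big_ord1 /= !odotm_nil.
set w := a :: w'; have wn0 : w != [::] by [].
set n := size w.
pose H i j := odotm (fun v => M (i :: v)) (drop i (take j w)) * odotm N (drop j w).
transitivity (\sum_(1 <= i < n.+1) V (take i w) *
   (M [::] * odotm (fun v => N (i :: v)) (drop i w) + \sum_(i <= j < n.+1) H i j)).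
  rewrite odotm_rec //; apply: eq_big_nat => i /andP[lt0i lein]; congr (_ * _).
  rewrite (eq_odotm _ (mulm_cons M N i)) odotmD odotmZ IHk; last first.
    by rewrite size_drop; move: ltwk lt0i; rewrite /= -/n; lia.
  congr (_ + _); rewrite /mulm size_drop -/n [RHS](big_addn 0 _ i) big_mkord.
  have -> : (n.+1 - i = (n - i).+1)%N by lia.
  by apply: eq_bigr => j _; rewrite /H take_drop drop_drop.
rewrite /mulm -(big_mkord xpredT (fun j => odotm M (take j w) * odotm N (drop j w))).
rewrite big_ltn // /= odotm_nil.
under eq_bigr do rewrite mulrDr mulrCA.
rewrite big_split /= -mulr_sumr -odotm_rec //; congr (_ + _).
have triangle i : (1 <= i < n.+1)%N -> V (take i w) * \sum_(i <= j < n.+1) H i j =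
    \sum_(1 <= j < n.+1) (if (i <= j)%N then V (take i w) * H i j else 0).
  move=> /andP[lt0i _]; rewrite mulr_sumr (big_nat_widenl _ 1) // big_mkcond /=.
  by apply: eq_bigr => j _; case: ifP.
rewrite (eq_big_nat _ _ triangle) exchange_big_nat; apply: eq_big_nat => j /andP[lt0j lejn].
have sizej : size (take j w) = j by rewrite size_takel.
rewrite (odotm_rec _ (w := take j w)) -?size_eq0 ?sizej -?lt0n // mulr_suml.
rewrite [RHS](big_nat_widen _ _ n.+1) // [RHS]big_mkcond.
apply: eq_big_nat => i _ /=; rewrite ltnS; case: ifP => // leij.
by rewrite take_takel // /H mulrA.
Qed.

Lemma odotmX M k w : odotm (powm M k) w = powm (odotm M) k w.
Proof.
elim: k w => [|k IHk] w; first exact: odotm1.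
by rewrite [powm M k.+1]/powm /= odotmM; apply: eq_mulm.
Qed.

Lemma odotm_logm M w : M [::] = 1 -> odotm (logm M) w = logm (odotm M) w.
Proof.
move=> M1; rewrite (@eq_odotm_le _ (fun n => \sum_(1 <= k < (size w).+1)
   (-1) ^+ k.-1 / k%:R * powm (fun v => M v - onem v) k n)); last first.
  by move=> n len; apply: logm_widen => //; lia.
rewrite odotm_sum /logm; apply: eq_bigr => k _; rewrite odotmZ odotmX; congr (_ * _).
by apply: eq_powm => v; rewrite odotmB odotm1.
Qed.

Lemma odotm_mul_sumn M w : odotm (fun n => M n * (sumn n)%:R) w = (size w)%:R * odotm M w.
Proof.
elim: {w}(size w).+1 {-2}w (ltnSn (size w)) M => [|k IHk] [|a w] // ltwk M.
  by rewrite !odotm_nil mulr0 mul0r.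
rewrite !odotm_rec // mulr_sumr; apply: eq_big_nat => i /andP[lt0i leiw].
rewrite (@eq_odotm _ (fun v => i%:R * M (i :: v) + M (i :: v) * (sumn v)%:R)); last first.
  by move=> v /=; rewrite natrD mulrDr mulrC.
rewrite odotmD odotmZ IHk; last by rewrite size_drop; move: ltwk lt0i leiw => /=; lia.
rewrite -mulrDl -natrD size_drop mulrCA; congr (_%:R * _).
by move: lt0i leiw => /=; lia.
Qed.

End Substitution.

Definition Omega_to_bool (b : bool) : Omega := if b then ly else lx.
Lemma is_yK : cancel is_y Omega_to_bool. Proof. by case. Qed.
HB.instance Definition _ := Equality.copy Omega (can_type is_yK).

Lemma odotU_odotm M w : odotU M w = odotm U M w.
Proof. by case: w => [|a w]; rewrite ?odotm_nil. Qed.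

Lemma S_N_nil : S_N [::] = 1.
Proof. by rewrite /S_N big_ord0. Qed.

Lemma S_N_cons i v : (0 < i)%N -> S_N (i :: v) * (sumn (i :: v))%:R = S_N v.
Proof.
move=> lt0i; rewrite /S_N /= big_ord_recl /= -sumnE /=.
rewrite mulrAC mulVf ?mul1r; last by rewrite pnatr_eq0; lia.
by apply: eq_bigr => j _.
Qed.

Lemma alternating_binomial_sum (R : numFieldType) m :
  \sum_(j < m.+1) (-1) ^+ j / ((j`!)%:R * ((m - j)`!)%:R) = (m == 0%N)%:R :> R.
Proof.
have fact_neq0 n : (n`!)%:R != 0 :> R by rewrite pnatr_eq0 -lt0n fact_gt0.
apply: (mulfI (fact_neq0 m)).
have -> : m`!%:R * (m == 0%N)%:R = (1 + (-1)) ^+ m :> R.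
  by case: m => [|m]; rewrite ?mulr0 ?mul1r // addrN expr0n.
rewrite exprDn mulr_sumr; apply: eq_bigr => j _.
have lejm : (j <= m)%N by rewrite -ltnS.
rewrite expr1n mul1r -mulr_natr -(bin_fact lejm) !natrM mul1r -[RHS]mulr_natr.
by rewrite mulrACA mulfV ?mulf_neq0 // mulr1 mulrC.
Qed.

Definition no_head_x (v : seq Omega) : bool := if v is lx :: _ then false else true.

Lemma take_nseq_cat (T : Type) (a : T) i p r :
  (i <= p)%N -> take i (nseq p a ++ r) = nseq i a.
Proof.
move=> leip; rewrite take_cat size_nseq; case: ltnP => [ltip|leip'].
  by rewrite take_nseq // ltnW.
have -> : i = p by lia.
by rewrite subnn take0 cats0.
Qed.

Lemma drop_nseq_cat (T : Type) (a : T) i p r :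
  (i <= p)%N -> drop i (nseq p a ++ r) = nseq (p - i) a ++ r.
Proof.
move=> leip; rewrite drop_cat size_nseq; case: ltnP => [ltip|leip'].
  by rewrite drop_nseq.
have -> : i = p by lia.
by rewrite subnn drop0.
Qed.

Lemma I_xE s : I_x s = (s == [:: lx])%:R.
Proof. by case: s => [|[] [|b s]]. Qed.

Lemma I_yE s : I_y s = (s == [:: ly])%:R.
Proof. by case: s => [|[] [|b s]]. Qed.

Lemma S_Om_nseq_x_cat k v : no_head_x v -> S_Om (nseq k lx ++ v) = expm I_y v / (k`!)%:R.
Proof.
move=> hv; rewrite /S_Om /mulm size_cat size_nseq.
have ltk : (k < (k + size v).+1)%N by lia.
rewrite (bigD1 (Ordinal ltk)) //= big1 ?addr0.
  rewrite take_size_cat ?size_nseq // drop_size_cat ?size_nseq //.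
  by rewrite (expm_letter I_xE) all_pred1_nseq /= size_nseq mulrC.
move=> i ne; case: (ltngtP i k) => [ltik|ltki|eqik].
- rewrite drop_nseq_cat; last by lia.
  have -> : (k - i = (k - i).-1.+1)%N by lia.
  by rewrite (expm_letter I_yE) /= mulr0.
- move: (nat_of_ord i) (ltn_ord i) ltki => j ltj ltkj; clear ne i.
  rewrite take_cat size_nseq ltnNge (ltnW ltkj) /=.
  case: v hv ltk ltj => [|[] v] //= hv ltk ltj; first by lia.
  have -> : (j - k = (j - k).-1.+1)%N by lia.
  by rewrite (expm_letter I_xE) /= all_cat /= andbF mul0r.
- by move: ne; rewrite -val_eqE /= eqik eqxx.
Qed.

Lemma S_Om_nil : S_Om [::] = 1.
Proof. by rewrite (S_Om_nseq_x_cat 0 (v := [::])) // (expm_letter I_yE) invr1 mulr1. Qed.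

Lemma U_nseq_x i : U (nseq i lx) = (i == 1%N)%:R.
Proof. by case: i => [|[|i]] //=; rewrite count_nseq. Qed.

Lemma U_nseq_x_y p v : U (nseq p lx ++ ly :: v) =
  if (count is_y v == 0)%N then (-1) ^+ (size v) / ((p`!)%:R * ((size v)`!)%:R) else 0.
Proof.
have -> : U (nseq p lx ++ ly :: v) = if (count is_y (nseq p lx ++ ly :: v) == 1)%N then
    (-1) ^+ (size (nseq p lx ++ ly :: v) - find is_y (nseq p lx ++ ly :: v) - 1) /
    (((find is_y (nseq p lx ++ ly :: v))`!)%:R *
     ((size (nseq p lx ++ ly :: v) - find is_y (nseq p lx ++ ly :: v) - 1)`!)%:R)
    else 0 by case: p => [|[|p]].
rewrite count_cat count_nseq /= mul0n add0n add1n eqSS.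
rewrite find_cat has_nseq /= andbF size_nseq addn0 size_cat size_nseq /=.
by have -> : (p + (size v).+1 - p - 1 = size v)%N by lia.
Qed.

Lemma nseq_x_cat_no_head_x w : exists k v, w = nseq k lx ++ v /\ no_head_x v.
Proof.
elim: w => [|a w [k [v [-> hv]]]]; first by exists 0%N, [::].
case: a; first by exists k.+1, v.
by exists 0%N, (ly :: nseq k lx ++ v).
Qed.

(* Among the prefixes [x^i] of [x^p r], only [i = 1] has [U^{x^i} <> 0]. *)
Lemma sum_prefix_nseq_x p r : no_head_x r ->
  \sum_(1 <= i < p.+1) U (take i (nseq p lx ++ r)) * S_Om (drop i (nseq p lx ++ r))
  = p%:R * expm I_y r / (p`!)%:R.
Proof.
move=> hr; case: p => [|p]; first by rewrite big_geq // !mul0r.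
rewrite big_ltn // (@take_nseq_cat _ _ 1) // (@drop_nseq_cat _ _ 1) // U_nseq_x mul1r.
rewrite big1_seq ?addr0; last first.
  move=> i /andP[_]; rewrite mem_index_iota => /andP[lt1i leip].
  rewrite take_nseq_cat; last by lia.
  by rewrite U_nseq_x (_ : (i == 1%N) = false) ?mul0r //; apply/eqP; lia.
rewrite subn1 /= S_Om_nseq_x_cat // factS natrM invfM mulrACA mulfV ?mul1r //.
by rewrite pnatr_eq0.
Qed.

Lemma take_nseq_x_y j p v :
  take (j + p.+1) (nseq p lx ++ ly :: v) = nseq p lx ++ ly :: take j v.
Proof.
rewrite take_cat size_nseq ltnNge (_ : (p <= j + p.+1)%N); last by lia.
by have -> : (j + p.+1 - p = j.+1)%N by lia.
Qed.

Lemma drop_nseq_x_y j p v : drop (j + p.+1) (nseq p lx ++ ly :: v) = drop j v.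
Proof.
rewrite drop_cat size_nseq ltnNge (_ : (p <= j + p.+1)%N); last by lia.
by have -> : (j + p.+1 - p = j.+1)%N by lia.
Qed.

(* Prefixes [x^p y x^j] of [x^p y x^m r] with [j <= m] contribute an
   alternating binomial sum; longer prefixes contain a second [y]. *)
Lemma sum_prefix_nseq_x_y p m r : no_head_x r ->
  \sum_(p.+1 <= i < (p + (m + size r).+1).+1)
     U (take i (nseq p lx ++ ly :: (nseq m lx ++ r))) *
     S_Om (drop i (nseq p lx ++ ly :: (nseq m lx ++ r)))
  = (m == 0%N)%:R * expm I_y r / (p`!)%:R.
Proof.
move=> hr; rewrite (big_addn 0 _ p.+1).
have -> : ((p + (m + size r).+1).+1 - p.+1 = (m + size r).+1)%N by lia.
rewrite (big_cat_nat _ (n := m.+1)) //=; last by lia.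
rewrite [X in _ + X]big1_seq ?addr0; last first.
  move=> j /andP[_]; rewrite mem_index_iota => /andP[ltmj ltj].
  rewrite take_nseq_x_y U_nseq_x_y take_cat size_nseq ltnNge (ltnW ltmj) /=.
  case: r hr ltj => [|[] r] //= hr ltj; first by lia.
  have -> : (j - m = (j - m).-1.+1)%N by lia.
  by rewrite /= count_cat count_nseq /= mul0r.
transitivity (\sum_(0 <= j < m.+1) (expm I_y r / (p`!)%:R) *
                 ((-1) ^+ j / ((j`!)%:R * ((m - j)`!)%:R))).
  apply: eq_big_nat => j /andP[_ ltjm].
  rewrite take_nseq_x_y drop_nseq_x_y take_nseq_cat ?drop_nseq_cat; try lia.
  rewrite U_nseq_x_y count_nseq /= size_nseq S_Om_nseq_x_cat // !invfM.
  by ring.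
by rewrite -mulr_sumr big_mkord alternating_binomial_sum mulrC mulrA.
Qed.

Lemma expm_I_y_cons m r :
  ((m + size r).+1)%:R * expm I_y (ly :: nseq m lx ++ r) = (m == 0%N)%:R * expm I_y r.
Proof.
rewrite !(expm_letter I_yE); case: m => [|m]; last by rewrite /= mulr0 mul0r.
rewrite /= mul1r; case: (all (pred1 ly) r); last by rewrite mulr0.
by rewrite factS natrM invfM mulrA mulfV ?mul1r // pnatr_eq0.
Qed.

Lemma size_mul_S_Om w : w != [::] ->
  (size w)%:R * S_Om w = \sum_(1 <= i < (size w).+1) U (take i w) * S_Om (drop i w).
Proof.
have [p [r [-> hr]]] := nseq_x_cat_no_head_x w.
case: r hr => [|[] r'] // hr wn0.
  by rewrite size_cat size_nseq addn0 sum_prefix_nseq_x // S_Om_nseq_x_cat // mulrA.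
have [m [r [-> hr'']]] := nseq_x_cat_no_head_x r'.
rewrite size_cat size_nseq /= size_cat size_nseq.
rewrite (big_cat_nat _ (n := p.+1)) //=; last by lia.
rewrite sum_prefix_nseq_x // sum_prefix_nseq_x_y // S_Om_nseq_x_cat //.
by rewrite natrD mulrDl !mulrA expm_I_y_cons.
Qed.

Lemma odotm_U_S_N w : odotm U S_N w = S_Om w.
Proof.
elim: {w}(size w).+1 {-2}w (ltnSn (size w)) => [|k IHk] [|a w] // ltwk.
  by rewrite odotm_nil S_N_nil S_Om_nil.
have size_neq0 : (size (a :: w))%:R != 0 :> rat by rewrite pnatr_eq0.
apply: (mulfI size_neq0); rewrite -odotm_mul_sumn size_mul_S_Om // odotm_rec //.
apply: eq_big_nat => i /andP[lt0i leiw]; congr (_ * _).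
rewrite (@eq_odotm _ _ _ S_N); last by move=> v; rewrite S_N_cons.
by apply: IHk; rewrite size_drop; move: ltwk lt0i => /=; lia.
Qed.

Theorem theorem5p2 :
  (forall w : seq Omega, odotU S_N w = S_Om w) /\
  (forall w : seq Omega, odotU T_N w = T_Om w).
Proof.
split=> w; rewrite odotU_odotm; first exact: odotm_U_S_N.
rewrite odotm_logm ?S_N_nil //.
by apply: eq_logm => v; rewrite odotm_U_S_N.
Qed.
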